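(* Let $H\ge 1$ and $m\ge 1$ be integers and let $V_0\in\mathbb{R}^{|\mathcal S|}$ be arbitrary. Consider the iteration (generalized policy iteration with lookahead): for $k=0,1,2,\dots$, let $(\mu_{k+1},\nu_{k+1})$ be an $H$-step lookahead policy pair for $V_k$, i.e. a pair of stationary randomized policies satisfying $T_{\mu_{k+1},\nu_{k+1}}(T^{H-1}V_k)=T^{H}V_k$, and set $$V_{k+1}=T_{\mu_{k+1},\nu_{k+1}}^{m}\,T^{H-1}V_k .$$ Then for every $k\ge 0$, $$\|V_k-J^*\|_\infty\le\Big(\alpha^{H-1}+(1+\alpha^m)\frac{\alpha^{H-1}}{1-\alpha}(1+\alpha)\Big)^k\|V_0-J^*\|_\infty .$$ In particular, if $H$ and $m$ satisfy $\alpha^{H-1}+2(1+\alpha^m)\frac{\alpha^{H-1}}{1-\alpha}<1$, then $V_k\to J^*$ exponentially fast.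
   Context: A two-player zero-sum discounted Markov game has a finite state space $\mathcal S$, finite action sets $\mathcal U(s)$ (maximizer) and $\mathcal V(s)$ (minimizer) at each state $s$, transition probabilities $P(s'|s,u,v)$, reward $g(s,u,v)\in[0,1]$, and discount factor $\alpha\in(0,1)$. A (stationary randomized) policy pair $(\mu,\nu)$ assigns to each $s$ distributions $\mu(s)\in\Delta(\mathcal U(s))$, $\nu(s)\in\Delta(\mathcal V(s))$. For $V\in\mathbb{R}^{|\mathcal S|}$ and $s\in\mathcal S$ let $A_{V,s}\in\mathbb{R}^{|\mathcal U(s)|\times|\mathcal V(s)|}$ be $A_{V,s}(u,v)=g(s,u,v)+\alpha\sum_{s'}P(s'|s,u,v)V(s')$. Define $T_{\mu,\nu}V(s)=\mu(s)^\top A_{V,s}\nu(s)$ and the Bellman operator $TV(s)=\max_{p\in\Delta(\mathcal U(s))}\min_{q\in\Delta(\mathcal V(s))}p^\top A_{V,s}q$. $J^{\mu,\nu}$ denotes the unique fixed point of $T_{\mu,\nu}$ (the expected discounted reward of $(\mu,\nu)$), and $J^*$ denotes the unique fixed point of $T$ (the Nash equilibrium value of the game). $T^j$ and $T_{\mu,\nu}^j$ denote $j$-fold compositions, $T^0$ is the identity. *)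

From HB Require Import structures.
From mathcomp Require Import all_boot all_order all_algebra.
From mathcomp Require Import classical_sets reals.
Set Implicit Arguments. Unset Strict Implicit. Unset Printing Implicit Defensive.
Import Order.TTheory GRing.Theory Num.Theory.
Local Open Scope ring_scope.
Local Open Scope classical_set_scope.

Section Game.
Variables (R : realType) (S : finType) (nU nV : S -> nat).
(* actions at state s: 'I_(nU s) (maximizer), 'I_(nV s) (minimizer) *)
Variables (g : forall s, 'I_(nU s) -> 'I_(nV s) -> R)
          (P : forall s, 'I_(nU s) -> 'I_(nV s) -> S -> R) (alpha : R).

Definition is_dist (n : nat) (p : 'I_n -> R) : Prop :=
  (forall i, 0 <= p i) /\ \sum_(i < n) p i = 1.

Definition is_policyU (mu : forall s, 'I_(nU s) -> R) : Prop :=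
  forall s, is_dist (mu s).
Definition is_policyV (nu : forall s, 'I_(nV s) -> R) : Prop :=
  forall s, is_dist (nu s).

Definition Amat (W : S -> R) (s : S) (u : 'I_(nU s)) (v : 'I_(nV s)) : R :=
  @g s u v + alpha * \sum_(s' : S) @P s u v s' * W s'.

Definition bilin (m n : nat) (p : 'I_m -> R) (M : 'I_m -> 'I_n -> R)
  (q : 'I_n -> R) : R :=
  \sum_(u < m) \sum_(v < n) p u * M u v * q v.

Definition Tpol (mu : forall s, 'I_(nU s) -> R) (nu : forall s, 'I_(nV s) -> R)
  (W : S -> R) : S -> R :=
  fun s => bilin (mu s) (@Amat W s) (nu s).

(* value of the matrix game max_p min_q p^T M q (sup/inf are attained) *)
Definition game_value (m n : nat) (M : 'I_m -> 'I_n -> R) : R :=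
  sup [set x | exists p : 'I_m -> R, is_dist p /\
        x = inf [set y | exists q : 'I_n -> R, is_dist q /\ y = bilin p M q]].

Definition Tbell (W : S -> R) : S -> R :=
  fun s => game_value (@Amat W s).

End Game.

Definition supnorm (R : realType) (S : finType) (W : S -> R) : R :=
  \big[Num.max/0]_(s : S) `|W s|.

From HB Require Import structures.
From mathcomp Require Import all_boot all_order all_algebra.
From mathcomp Require Import classical_sets reals.
From mathcomp Require Import ring lra.
Import Order.TTheory GRing.Theory Num.Theory.
Local Open Scope ring_scope.
Local Open Scope classical_set_scope.
Set Implicit Arguments. Unset Strict Implicit. Unset Printing Implicit Defensive.

(* 1. Matrix games: the bilinear payoff p^T M q of two distributions is
      monotone under entrywise domination up to an additive constant, and so
      is the value max_p min_q p^T M q.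
   2. Hence both the policy operator T_{mu,nu} and the Bellman operator T are
      alpha-contractions for the sup norm (since each A_{V,s} depends on V
      through alpha * P V, a stochastic average).
   3. Abstract contraction facts: iterates of an a-contraction are
      a^j-contractions, and the iterates of an a-contraction F stay within
      ||F W - W|| / (1 - a) of their starting point W.
   4. One step of the iteration: with W = T^(H-1) V, the lookahead condition
      T_{mu,nu} W = T W gives ||T_{mu,nu} W - W|| <= (1 + alpha) ||W - J*||,
      so ||T_{mu,nu}^m W - J*|| <= (alpha^(H-1) + (1+alpha) alpha^(H-1) /
      (1 - alpha)) ||V - J*||, which is below the factor of the theorem. *)

Section MatrixGames.
Variable R : realType.

Lemma dist_exists n : (0 < n)%N -> exists p : 'I_n -> R, is_dist p.
Proof.
move=> n_gt0; exists (fun i => ((i == Ordinal n_gt0)%:R : R)).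
split=> [i|]; first by rewrite ler0n.
by rewrite (bigD1 (Ordinal n_gt0)) //= ?eqxx big1 ?addr0 // => i /negPf ->.
Qed.

Lemma dist_le1 n (p : 'I_n -> R) i : is_dist p -> p i <= 1.
Proof.
move=> [p_ge0 p_sum1]; rewrite -p_sum1 (bigD1 i) //= lerDl.
by apply: sumr_ge0 => j _; apply: p_ge0.
Qed.

Lemma bilin_addr m n (p : 'I_m -> R) (q : 'I_n -> R) M d :
  is_dist p -> is_dist q ->
  bilin p (fun u v => M u v + d) q = bilin p M q + d.
Proof.
move=> [_ p_sum1] [_ q_sum1]; rewrite /bilin.
under eq_bigr => u _.
  rewrite (_ : \sum_(v < n) _ = \sum_(v < n) p u * M u v * q v + p u * d).
    over.
  rewrite -[p u * d]mulr1 -q_sum1 mulr_sumr -big_split /=.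
  by apply: eq_bigr => v _; rewrite mulrDr mulrDl.
by rewrite big_split /= -mulr_suml p_sum1 mul1r.
Qed.

Lemma bilin_le m n (p : 'I_m -> R) (q : 'I_n -> R) M M' d :
  is_dist p -> is_dist q -> (forall u v, M u v <= M' u v + d) ->
  bilin p M q <= bilin p M' q + d.
Proof.
move=> dp dq leM; rewrite -bilin_addr //.
apply: ler_sum => u _; apply: ler_sum => v _.
apply: ler_wpM2r; first by case: dq.
by apply: ler_wpM2l; [case: dp | exact: leM].
Qed.

Lemma bilin_norm_le m n (p : 'I_m -> R) (q : 'I_n -> R) M :
  is_dist p -> is_dist q -> `|bilin p M q| <= \sum_u \sum_v `|M u v|.
Proof.
move=> dp dq; apply: le_trans (ler_norm_sum _ _ _) _; apply: ler_sum => u _.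
apply: le_trans (ler_norm_sum _ _ _) _; apply: ler_sum => v _.
rewrite !normrM (ger0_norm (proj1 dp u)) (ger0_norm (proj1 dq v)).
rewrite -[X in _ <= X]mul1r -[X in _ <= X]mulr1.
apply: ler_pM; rewrite ?mulr_ge0 ?(proj1 dp u) ?(proj1 dq v) ?dist_le1 //.
by rewrite ler_wpM2r ?dist_le1.
Qed.

Definition guaranteed m n (M : 'I_m -> 'I_n -> R) (p : 'I_m -> R) : R :=
  inf [set y | exists q : 'I_n -> R, is_dist q /\ y = bilin p M q].

Lemma guaranteed_le_bilin m n (M : 'I_m -> 'I_n -> R) p q :
  is_dist p -> is_dist q -> guaranteed M p <= bilin p M q.
Proof.
move=> dp dq; apply: ge_inf; last by exists q.
exists (- \sum_u \sum_v `|M u v|) => _ [q' [dq' ->]].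
rewrite lerNl; apply: le_trans (ler_norm _) _.
by rewrite normrN bilin_norm_le.
Qed.

Lemma guaranteed_le_norm m n (M : 'I_m -> 'I_n -> R) p :
  (0 < n)%N -> is_dist p -> guaranteed M p <= \sum_u \sum_v `|M u v|.
Proof.
move=> n_gt0 dp; have [q dq] := dist_exists n_gt0.
apply: le_trans (guaranteed_le_bilin M dp dq) _.
exact: le_trans (ler_norm _) (bilin_norm_le _ dp dq).
Qed.

Lemma guaranteed_le m n (M M' : 'I_m -> 'I_n -> R) d p :
  (0 < n)%N -> is_dist p -> (forall u v, M u v <= M' u v + d) ->
  guaranteed M p <= guaranteed M' p + d.
Proof.
move=> n_gt0 dp leM; rewrite -lerBlDr; apply: lb_le_inf.
  by have [q dq] := dist_exists n_gt0; exists (bilin p M' q), q.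
move=> _ [q [dq ->]]; rewrite lerBlDr.
exact: le_trans (guaranteed_le_bilin M dp dq) (bilin_le dp dq leM).
Qed.

Lemma game_value_le m n (M M' : 'I_m -> 'I_n -> R) d :
  (0 < m)%N -> (0 < n)%N -> (forall u v, M u v <= M' u v + d) ->
  game_value M <= game_value M' + d.
Proof.
move=> m_gt0 n_gt0 leM.
rewrite /game_value -!/(guaranteed _ _); apply: ge_sup.
  by have [p dp] := dist_exists m_gt0; exists (guaranteed M p), p.
move=> _ [p [dp ->]]; apply: le_trans (guaranteed_le n_gt0 dp leM) _.
rewrite lerD2r; apply: ub_le_sup; last by exists p.
exists (\sum_u \sum_v `|M' u v|) => _ [p' [dp' ->]].
exact: guaranteed_le_norm.
Qed.

End MatrixGames.

Section SupNorm.
Variables (R : realType) (S : finType).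
Implicit Types (W : S -> R).

Definition supdist W W' : R := supnorm (fun s => W s - W' s).

Lemma supnorm_ge0 W : 0 <= supnorm W.
Proof. by rewrite /supnorm; elim/big_ind: _ => // x y; rewrite le_max => ->. Qed.

Lemma supnorm_ub W s : `|W s| <= supnorm W.
Proof. by rewrite /supnorm (bigD1 s) //= le_max lexx. Qed.

Lemma supnorm_le W c : 0 <= c -> (forall s, `|W s| <= c) -> supnorm W <= c.
Proof.
move=> c_ge0 leW; rewrite /supnorm; elim/big_ind: _ => // x y.
by rewrite ge_max => ->.
Qed.

Lemma supdist_ge0 W W' : 0 <= supdist W W'.
Proof. exact: supnorm_ge0. Qed.

Lemma supdistC W W' : supdist W W' = supdist W' W.
Proof. by rewrite /supdist /supnorm; apply: eq_bigr => s _; rewrite distrC. Qed.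

Lemma supdist_triangle W1 W2 W3 :
  supdist W1 W3 <= supdist W1 W2 + supdist W2 W3.
Proof.
apply: supnorm_le; first by rewrite addr_ge0 ?supdist_ge0.
move=> s; rewrite (_ : W1 s - W3 s = (W1 s - W2 s) + (W2 s - W3 s)); last by ring.
apply: le_trans (ler_normD _ _) _.
by apply: lerD; [exact: (supnorm_ub (fun s => W1 s - W2 s)) |
  exact: (supnorm_ub (fun s => W2 s - W3 s))].
Qed.

Definition contraction (F : (S -> R) -> S -> R) (a : R) : Prop :=
  forall W W', supdist (F W) (F W') <= a * supdist W W'.

Lemma contraction_of_le F a : 0 <= a ->
  (forall W W' s, F W s <= F W' s + a * supdist W W') -> contraction F a.
Proof.
move=> a_ge0 leF W W'; apply: supnorm_le; first by rewrite mulr_ge0 ?supdist_ge0.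
move=> s; rewrite ler_norml; apply/andP; split.
  by have := leF W' W s; rewrite supdistC; lra.
by have := leF W W' s; lra.
Qed.

Lemma contraction_iter F a j : 0 <= a -> contraction F a ->
  contraction (iter j F) (a ^+ j).
Proof.
move=> a_ge0 cF; elim: j => [|j IH] W W' /=; first by rewrite mul1r.
by rewrite exprS -mulrA (le_trans (cF _ _)) // ler_wpM2l.
Qed.

Lemma contraction_iter_drift F a W j : 0 <= a < 1 -> contraction F a ->
  supdist (iter j F W) W <= supdist (F W) W / (1 - a).
Proof.
case/andP=> a_ge0 a_lt1 cF; have one_a_gt0 : 0 < 1 - a by rewrite subr_gt0.
set D := supdist (F W) W.
have D_ge0 : 0 <= D / (1 - a) by rewrite divr_ge0 ?supdist_ge0 ?ltW.
elim: j => [|j IH] /=.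
  by apply: supnorm_le => // s; rewrite subrr normr0.
apply: le_trans (supdist_triangle _ (F W) _) _.
rewrite [X in _ <= X](_ : _ = a * (D / (1 - a)) + D); last by field; rewrite gt_eqF.
by rewrite lerD // (le_trans (cF _ _)) // ler_wpM2l.
Qed.

End SupNorm.

Section GameOperators.
Variables (R : realType) (S : finType) (nU nV : S -> nat).
Variables (g : forall s, 'I_(nU s) -> 'I_(nV s) -> R)
          (P : forall s, 'I_(nU s) -> 'I_(nV s) -> S -> R) (alpha : R).
Hypotheses (nU_gt0 : forall s, (0 < nU s)%N) (nV_gt0 : forall s, (0 < nV s)%N)
  (P_ge0 : forall s u v s', 0 <= @P s u v s')
  (P_sum1 : forall s u v, \sum_(s' : S) @P s u v s' = 1) (alpha_ge0 : 0 <= alpha).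

Lemma Amat_le (W W' : S -> R) (s : S) (u : 'I_(nU s)) (v : 'I_(nV s)) :
  Amat g P alpha W u v <= Amat g P alpha W' u v + alpha * supdist W W'.
Proof.
rewrite /Amat -addrA lerD2l -mulrDr ler_wpM2l //.
rewrite -[supdist _ _]mul1r -(P_sum1 u v) mulr_suml -big_split /=.
apply: ler_sum => s' _; rewrite -mulrDr ler_wpM2l // -lerBlDl.
exact: le_trans (ler_norm _) (supnorm_ub (fun s => W s - W' s) s').
Qed.

Lemma Tpol_contraction mu nu : is_policyU mu -> is_policyV nu ->
  contraction (Tpol g P alpha mu nu) alpha.
Proof.
move=> pmu pnu; apply: contraction_of_le => // W W' s.
by apply: bilin_le => // u v; apply: Amat_le.
Qed.

Lemma Tbell_contraction : contraction (Tbell g P alpha) alpha.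
Proof.
apply: contraction_of_le => // W W' s.
by apply: game_value_le => // u v; apply: Amat_le.
Qed.

End GameOperators.

Section LookaheadStep.
Variables (R : realType) (S : finType) (alpha : R).
Hypothesis alpha_bounds : 0 <= alpha < 1.
Variables (T Tmu : (S -> R) -> S -> R) (J : S -> R).
Hypotheses (T_contr : contraction T alpha) (Tmu_contr : contraction Tmu alpha)
  (TJ : T J = J).

Lemma lookahead_step h m V :
  Tmu (iter h T V) = T (iter h T V) ->
  supdist (iter m Tmu (iter h T V)) J
    <= (alpha ^+ h + (1 + alpha) * alpha ^+ h / (1 - alpha)) * supdist V J.
Proof.
move=> greedy; case/andP: alpha_bounds => a_ge0 a_lt1.
have one_a_gt0 : 0 < 1 - alpha by rewrite subr_gt0.
set W := iter h T V; set e := supdist V J.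
have iterTJ : iter h T J = J by elim: (h) => //= j ->.
have W_close : supdist W J <= alpha ^+ h * e.
  by rewrite -[in supdist W J]iterTJ contraction_iter.
have greedy_move : supdist (Tmu W) W <= (1 + alpha) * (alpha ^+ h * e).
  rewrite greedy (le_trans (supdist_triangle _ J _)) //.
  rewrite mulrDl mul1r addrC supdistC lerD //.
  by rewrite -[in supdist _ J]TJ (le_trans (T_contr _ _)) // ler_wpM2l.
apply: le_trans (supdist_triangle _ W _) _.
rewrite mulrDl addrC lerD //.
apply: le_trans (contraction_iter_drift W m alpha_bounds Tmu_contr) _.
rewrite mulrAC -(mulrA (1 + alpha)); apply: ler_wpM2r => //.
by rewrite invr_ge0 ltW.
Qed.

End LookaheadStep.

Section Rates.
Variable R : realType.

Lemma lookahead_factor_le (alpha : R) h m : 0 <= alpha < 1 ->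
  alpha ^+ h + (1 + alpha) * alpha ^+ h / (1 - alpha)
    <= alpha ^+ h + (1 + alpha ^+ m) * (alpha ^+ h / (1 - alpha)) * (1 + alpha).
Proof.
case/andP=> a_ge0 a_lt1; rewrite lerD2l.
have x_ge0 : 0 <= alpha ^+ h / (1 - alpha).
  by rewrite divr_ge0 ?exprn_ge0 // subr_ge0 ltW.
have am_ge0 : 0 <= alpha ^+ m by rewrite exprn_ge0.
rewrite -mulrA mulrC !mulrDl mul1r lerDl.
by apply: mulr_ge0; [exact: mulr_ge0 | rewrite addr_ge0].
Qed.

Lemma geometric_decay (x : nat -> R) c : 0 <= c ->
  (forall k, x k.+1 <= c * x k) -> forall k, x k <= c ^+ k * x 0%N.
Proof.
move=> c_ge0 step; elim=> [|k IH]; first by rewrite mul1r.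
by rewrite exprS -mulrA (le_trans (step k)) // ler_wpM2l.
Qed.

End Rates.

Local Close Scope classical_set_scope.
Unset Implicit Arguments. Set Strict Implicit.

Theorem theorem1 (R : realType) (S : finType) (nU nV : S -> nat)
  (g : forall s, 'I_(nU s) -> 'I_(nV s) -> R)
  (P : forall s, 'I_(nU s) -> 'I_(nV s) -> S -> R) (alpha : R)
  (hnU : forall s, (0 < nU s)%N) (hnV : forall s, (0 < nV s)%N)
  (hg : forall s u v, 0 <= g s u v <= 1)
  (hP0 : forall s u v s', 0 <= P s u v s')
  (hP1 : forall s u v, \sum_(s' : S) P s u v s' = 1)
  (halpha : 0 < alpha < 1)
  (Jstar : S -> R) (hJstar : Tbell g P alpha Jstar = Jstar)
  (H m : nat) (hH : (1 <= H)%N) (hm : (1 <= m)%N)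
  (mu : nat -> forall s, 'I_(nU s) -> R) (nu : nat -> forall s, 'I_(nV s) -> R)
  (Vs : nat -> S -> R)
  (hmu : forall k, is_policyU (mu k.+1)) (hnu : forall k, is_policyV (nu k.+1))
  (hlook : forall k,
     Tpol g P alpha (mu k.+1) (nu k.+1) (iter H.-1 (Tbell g P alpha) (Vs k))
     = iter H (Tbell g P alpha) (Vs k))
  (hV : forall k,
     Vs k.+1 = iter m (Tpol g P alpha (mu k.+1) (nu k.+1))
                 (iter H.-1 (Tbell g P alpha) (Vs k))) :
  (forall k : nat,
     supnorm (fun s => Vs k s - Jstar s)
     <= (alpha ^+ H.-1 + (1 + alpha ^+ m) * (alpha ^+ H.-1 / (1 - alpha)) * (1 + alpha)) ^+ k
        * supnorm (fun s => Vs 0%N s - Jstar s))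
  /\
  (alpha ^+ H.-1 + 2 * (1 + alpha ^+ m) * (alpha ^+ H.-1 / (1 - alpha)) < 1 ->
     exists rho : R, 0 <= rho < 1 /\
       forall k : nat, supnorm (fun s => Vs k s - Jstar s)
                       <= rho ^+ k * supnorm (fun s => Vs 0%N s - Jstar s)).
Proof.
have /andP[a_gt0 a_lt1] := halpha; have a_ge0 := ltW a_gt0.
have a_bounds : 0 <= alpha < 1 by rewrite a_ge0.
set c := alpha ^+ H.-1 + _ * _ * _.
have c_ge0 : 0 <= c.
  apply: le_trans (lookahead_factor_le H.-1 m a_bounds).
  apply: addr_ge0; first exact: exprn_ge0.
  by apply: divr_ge0; [rewrite mulr_ge0 ?addr_ge0 ?exprn_ge0 | rewrite subr_ge0 ltW].
have step k : supdist (Vs k.+1) Jstar <= c * supdist (Vs k) Jstar.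
  have greedy : Tpol g P alpha (mu k.+1) (nu k.+1) (iter H.-1 (Tbell g P alpha) (Vs k))
              = Tbell g P alpha (iter H.-1 (Tbell g P alpha) (Vs k)).
    by rewrite hlook -iterS prednK.
  rewrite hV; apply: le_trans (lookahead_step a_bounds
    (Tbell_contraction g hnU hnV hP0 hP1 a_ge0)
    (Tpol_contraction g hP0 hP1 a_ge0 (hmu k) (hnu k)) hJstar m greedy) _.
  by apply: ler_wpM2r; [exact: supdist_ge0 | exact: lookahead_factor_le].
have decay := geometric_decay (x := fun k => supdist (Vs k) Jstar) c_ge0 step.
split=> // small; exists c; rewrite c_ge0; split=> //.
apply: le_lt_trans small; rewrite /c lerD2l -[2 * _ * _]mulrA [2 * _]mulrC.
apply: ler_wpM2l; last by lra.
by rewrite mulr_ge0 ?addr_ge0 ?divr_ge0 ?exprn_ge0 // subr_ge0 ltW.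
Qed.
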